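(* Let $p$ be a prime, $n\ge 1$, let $F:\mathbb{F}_{p^n}\rightarrow \mathbb{F}_{p^n}$ be any function and let $\alpha\in\mathbb{F}_{p^n}$. Then for all $x\in\mathbb{F}_{p^n}$, \[\Delta_{\underbrace{\alpha,\alpha,\dots,\alpha}_{p-1}} F(x)= -\Delta_{\alpha,2\alpha,\dots,(p-1)\alpha} F(x).\]
   Context: For $F:\mathbb{F}_{p^n}\to\mathbb{F}_{p^n}$ and $\alpha\in\mathbb{F}_{p^n}$, the (first-order) discrete derivative is $\Delta_\alpha F(x)=F(x+\alpha)-F(x)$. For directions $\alpha_1,\dots,\alpha_d\in\mathbb{F}_{p^n}$ the $d$-th order derivative is defined recursively by $\Delta_{\alpha_1,\dots,\alpha_d}F=\Delta_{\alpha_1}\Delta_{\alpha_2,\dots,\alpha_d}F$, equivalently \[\Delta_{\alpha_1,\dots,\alpha_d} F(x)=\sum_{j=0}^{d}(-1)^{d-j}\sum_{\{i_1,\dots,i_j\}\subseteq\{1,\dots,d\}}F\Big(x+\sum_{k=1}^j\alpha_{i_k}\Big).\] Here $k\alpha$ for an integer $k$ denotes the $k$-fold sum of $\alpha$. *)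

From HB Require Import structures.
From mathcomp Require Import all_boot all_order all_algebra all_field.
Set Implicit Arguments. Unset Strict Implicit. Unset Printing Implicit Defensive.
Import GRing.Theory.
Local Open Scope ring_scope.

Definition ddelta (K : zmodType) (a : K) (F : K -> K) : K -> K :=
  fun x => F (x + a) - F x.

Fixpoint hdelta (K : zmodType) (s : seq K) (F : K -> K) : K -> K :=
  match s with
  | [::] => F
  | a :: s' => ddelta a (hdelta s' F)
  end.

From HB Require Import structures.
From mathcomp Require Import all_boot all_order all_algebra all_field.
Set Implicit Arguments. Unset Strict Implicit. Unset Printing Implicit Defensive.
Import GRing.Theory.
Local Open Scope ring_scope.

(* Writing T for the translation G |-> G (. + alpha), the derivative in
   direction i * alpha is T^i - 1, so both sides of the identity are
   polynomials in T applied to F:  (T - 1)^(p-1)  and  prod_(0<i<p) (T^i - 1).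
   Since p * alpha = 0 we have T^p = 1, and it suffices that the sum of these
   two polynomials is a multiple of X^p - 1.  Now
   prod_(0<i<p) (X^i - 1) = (X - 1)^(p-1) H  with  H(1) = (p-1)! = -1  by
   Wilson's theorem, so X - 1 divides H + 1 and the sum is a multiple of
   (X - 1)^p = X^p - 1. *)

Section ShiftOperator.
Variables (R : nzRingType) (alpha : R).

Definition shift_op (q : {poly R}) (G : R -> R) (x : R) : R :=
  \sum_(k < size q) q`_k * G (x + alpha *+ k).

Lemma shift_op_widen N (q : {poly R}) G x : (size q <= N)%N ->
  shift_op q G x = \sum_(k < N) q`_k * G (x + alpha *+ k).
Proof.
move=> le_qN; pose t k := q`_k * G (x + alpha *+ k).
rewrite /shift_op (big_ord_widen N t le_qN) big_mkcond /=.
by apply: eq_bigr => k _; case: ltnP => // le_qk; rewrite /t nth_default ?mul0r.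
Qed.

Lemma shift_opB (q r : {poly R}) G x :
  shift_op (q - r) G x = shift_op q G x - shift_op r G x.
Proof.
pose N := maxn (size q) (size r).
have le_qrN : (size (q - r)%R <= N)%N.
  by rewrite (leq_trans (size_polyD _ _)) // size_polyN.
rewrite !(@shift_op_widen N) ?leq_maxl ?leq_maxr // -sumrB.
by apply: eq_bigr => k _; rewrite coefB mulrBl.
Qed.

Lemma shift_opXnM i (q : {poly R}) G x :
  shift_op ('X^i * q) G x = shift_op q G (x + alpha *+ i).
Proof.
have le_size : (size ('X^i * q)%R <= i + size q)%N.
  by rewrite (leq_trans (size_polyMleq _ _)) // size_polyXn.
rewrite (shift_op_widen _ _ le_size) big_split_ord /= big1 ?add0r => [|k _].
  apply: eq_bigr => k _; rewrite coefXnM ltnNge leq_addr addKn.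
  by rewrite mulrnDr addrA.
by rewrite coefXnM ltn_ord mul0r.
Qed.

Lemma shift_op_Xn_sub1M i (q : {poly R}) G x :
  shift_op (('X^i - 1) * q) G x = shift_op q G (x + alpha *+ i) - shift_op q G x.
Proof. by rewrite mulrBl mul1r shift_opB shift_opXnM. Qed.

Lemma hdelta_shift_op (s : seq nat) F x :
  hdelta [seq alpha *+ i | i <- s] F x = shift_op (\prod_(i <- s) ('X^i - 1)) F x.
Proof.
elim: s x => [|i s IHs] x /=.
  by rewrite big_nil /shift_op size_poly1 big_ord1 coefC mul1r addr0.
by rewrite big_cons shift_op_Xn_sub1M /ddelta !IHs.
Qed.

Lemma shift_op_period m (q : {poly R}) G x : alpha *+ m = 0 ->
  shift_op (('X^m - 1) * q) G x = 0.
Proof. by move=> alpha_m; rewrite shift_op_Xn_sub1M alpha_m addr0 subrr. Qed.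

End ShiftOperator.

Lemma natr_fact_pred_pchar (R : nzRingType) p : p \in [pchar R] ->
  (p.-1)`!%:R = -1 :> R.
Proof.
move=> pRp; apply/eqP; rewrite -subr_eq0 opprK -mulrSr.
have p_prime := pcharf_prime pRp.
by rewrite -(dvdn_pcharf pRp) -Wilson ?prime_gt1.
Qed.

Lemma subr1X_pchar (R : nzRingType) p (x : R) : p \in [pchar R] ->
  (x - 1) ^+ p = x ^+ p - 1.
Proof.
move=> pRp; rewrite -!(pFrobenius_autE pRp).
by rewrite pFrobenius_autB_comm ?pFrobenius_aut1 //; exact: commr1.
Qed.

Lemma prod_Xn_sub1 (R : comNzRingType) (s : seq nat) :
  \prod_(i <- s) ('X^i - 1 : {poly R})
    = ('X - 1) ^+ size s * \prod_(i <- s) \sum_(j < i) 'X^j.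
Proof.
rewrite (eq_bigr _ (fun i _ => subrX1 'X i)) big_split /=.
by rewrite big_const_seq count_predT iter_mulr_1.
Qed.

Lemma Xp_sub1_dvd_prod_Xn_sub1D (R : comNzRingType) p : p \in [pchar R] ->
  exists r : {poly R},
    \prod_(1 <= i < p) ('X^i - 1) + ('X - 1) ^+ p.-1 = ('X^p - 1) * r.
Proof.
move=> pRp; have p_gt0 : (0 < p)%N := prime_gt0 (pcharf_prime pRp).
set H : {poly R} := \prod_(1 <= i < p) \sum_(j < i) 'X^j.
have H1 : H.[1] = (p.-1)`!%:R.
  rewrite horner_prod fact_prod natr_prod prednK //.
  apply: eq_bigr => i _; rewrite horner_sum.
  by under eq_bigr do rewrite hornerXn expr1n; rewrite sumr_const card_ord.
have /factor_theorem[r Hr] : root (H + 1) 1.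
  by rewrite /root hornerD hornerC H1 natr_fact_pred_pchar // addNr.
exists r; rewrite prod_Xn_sub1 size_iota -subn1 -{2}[_ ^+ (p - 1)]mulr1 -mulrDr.
rewrite Hr polyC1 mulrCA -exprSr subn1 prednK // subr1X_pchar ?pchar_poly //.
exact: mulrC.
Qed.

Theorem lemma1 (p n : nat) (K : finFieldType) (F : K -> K) (alpha : K) :
  prime p -> (1 <= n)%N -> p \in [pchar K] -> #|K| = (p ^ n)%N ->
  forall x : K,
    hdelta (nseq p.-1 alpha) F x
    = - hdelta (mkseq (fun i => alpha *+ i.+1) p.-1) F x.
Proof.
move=> _ _ pKp _ x.
have -> : nseq p.-1 alpha = [seq alpha *+ i | i <- nseq p.-1 1%N].
  by rewrite map_nseq.
have -> : mkseq (fun i => alpha *+ i.+1) p.-1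
          = [seq alpha *+ i | i <- index_iota 1 p].
  by rewrite /mkseq /index_iota subn1 (iotaDl 1 0) -map_comp.
rewrite !hdelta_shift_op big_nseq iter_mulr_1 expr1.
have [r Er] := Xp_sub1_dvd_prod_Xn_sub1D pKp.
rewrite -[_ ^+ p.-1](addKr (\prod_(1 <= i < p) ('X^i - 1))) Er addrC shift_opB.
by rewrite shift_op_period ?mulrn_pchar ?sub0r.
Qed.
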